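(* Let $A$ be a partially ordered set with a bottom element. Then for every set $S$ of passable games over $A$, a least upper bound of $S$ with respect to $\le$ exists and is equivalent to a passable game.
   Context: Games over a poset $A$ are defined inductively: for each $a\in A$ there is an atomic game $[a]$, which has no options; and if $L$ and $R$ are non-empty sets of games, then $\{L\mid R\}$ is a composite game with left options $L$ and right options $R$. The relations $\le$ and $\lhd$ are defined by simultaneous recursion: $G\le H$ iff (1) every left option $G^L$ of $G$ satisfies $G^L\lhd H$, (2) every right option $H^R$ of $H$ satisfies $G\lhd H^R$, and (3) if $G$ or $H$ is atomic then $G\lhd H$; and $G\lhd H$ iff (1) some right option $G^R$ of $G$ satisfies $G^R\le H$, or (2) some left option $H^L$ of $H$ satisfies $G\le H^L$, or (3) $G=[a]$, $H=[b]$ are atomic and $a\le b$. $G\equiv H$ means $G\le H$ and $H\le G$. A least upper bound of $S$ is a game $M$ with $H\le M$ for all $H\in S$ and $M\le M'$ whenever $H\le M'$ for all $H\in S$. A game $G$ is passable if $G\lhd G$ and recursively all its options are passable. *)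

(* Index types for sets of options.  Games form a proper class; a "set" of
   games is a family indexed by a type in this fixed universe. *)
Definition idx : Type := Type.

Inductive game (A : Type) : Type :=
| Atom (a : A)
| Comp (I J : idx) (hI : inhabited I) (hJ : inhabited J)
       (L : I -> game A) (R : J -> game A).

Arguments Atom {A} a.
Arguments Comp {A} I J hI hJ L R.

Definition is_atom {A : Type} (G : game A) : Prop :=
  match G with Atom _ => True | Comp _ _ _ _ _ _ => False end.

Section Rel.
Context {A : Type}.
Variable leA : A -> A -> Prop.

(* lelf G H = (G <= H, G <| H), by simultaneous recursion on (G, H). *)
Fixpoint lelf (G : game A) {struct G} : game A -> Prop * Prop :=
  fix aux (H : game A) {struct H} : Prop * Prop :=
    let lf : Prop :=
      (match G with
       | Atom _ => False
       | Comp _ _ _ _ _ GR => exists j, fst (lelf (GR j) H)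
       end)
      \/ (match H with
          | Atom _ => False
          | Comp _ _ _ _ HL _ => exists i, fst (aux (HL i))
          end)
      \/ (match G, H with
          | Atom a, Atom b => leA a b
          | _, _ => False
          end) in
    let le : Prop :=
      (match G with
       | Atom _ => True
       | Comp _ _ _ _ GL _ => forall i, snd (lelf (GL i) H)
       end)
      /\ (match H with
          | Atom _ => True
          | Comp _ _ _ _ _ HR => forall j, snd (aux (HR j))
          end)
      /\ (is_atom G \/ is_atom H -> lf) in
    (le, lf).

Definition game_le (G H : game A) : Prop := fst (lelf G H).
Definition game_lf (G H : game A) : Prop := snd (lelf G H).
Definition game_equiv (G H : game A) : Prop := game_le G H /\ game_le H G.

Definition is_lub {I : idx} (S : I -> game A) (M : game A) : Prop :=
  (forall i, game_le (S i) M) /\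
  (forall M', (forall i, game_le (S i) M') -> game_le M M').

Fixpoint passable (G : game A) : Prop :=
  game_lf G G /\
  match G with
  | Atom _ => True
  | Comp _ _ _ _ L R => (forall i, passable (L i)) /\ (forall j, passable (R j))
  end.

End Rel.

(* For a nonempty family S of passable games, put
     D := { S | [bot] }   and   M := { S, S^L | D }.
   Every S_i is below M: its left options reappear among those of M, and S_i <| D
   because S_i is a left option of D.  Conversely, if every S_i <= X then M <= X:
   S_i <| S_i <= X by passability, S_i^L <| S_i <= X, and M <| X^R (or M <| X
   when X is an atom) through D, since a game { L | [bot] } lies below any Y with
   L <| Y.  M is itself passable, as M <| M through D <= M. *)

From Stdlib Require Import Classical.

Definition left_idx {A : Type} (G : game A) : idx :=
  match G with Atom _ => False | Comp X _ _ _ _ _ => X end.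

Definition right_idx {A : Type} (G : game A) : idx :=
  match G with Atom _ => False | Comp _ Y _ _ _ _ => Y end.

Definition left_opt {A : Type} (G : game A) : left_idx G -> game A :=
  match G as G0 return left_idx G0 -> game A with
  | Atom _ => fun f => False_rect _ f
  | Comp _ _ _ _ L _ => L
  end.

Definition right_opt {A : Type} (G : game A) : right_idx G -> game A :=
  match G as G0 return right_idx G0 -> game A with
  | Atom _ => fun f => False_rect _ f
  | Comp _ _ _ _ _ R => R
  end.

Lemma game_opt_ind {A : Type} (P : game A -> Prop) :
  (forall G, (forall l, P (left_opt G l)) -> (forall r, P (right_opt G r)) -> P G) ->
  forall G, P G.
Proof.
  intros step G; induction G as [a|I J hI hJ L IHL R IHR].
  - apply step; intros [].
  - apply step; assumption.
Qed.

Section GameOrder.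

Context {A : Type} (leA : A -> A -> Prop).

Local Notation "G <=g H" := (game_le leA G H) (at level 70).
Local Notation "G <|g H" := (game_lf leA G H) (at level 70).

Definition atoms_le (G H : game A) : Prop :=
  match G, H with Atom a, Atom b => leA a b | _, _ => False end.

Lemma game_le_iff (G H : game A) :
  G <=g H <->
  (forall l, left_opt G l <|g H) /\ (forall r, G <|g right_opt H r) /\
  (is_atom G \/ is_atom H -> G <|g H).
Proof. destruct G, H; cbn; firstorder; contradiction. Qed.

Lemma game_lf_iff (G H : game A) :
  G <|g H <->
  (exists r, right_opt G r <=g H) \/ (exists l, G <=g left_opt H l) \/ atoms_le G H.
Proof. destruct G, H; cbn; firstorder. Qed.

Lemma game_lf_right_opt (G H : game A) r : right_opt G r <=g H -> G <|g H.
Proof. intro h; apply game_lf_iff; left; exists r; exact h. Qed.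

Lemma game_lf_left_opt (G H : game A) l : G <=g left_opt H l -> G <|g H.
Proof. intro h; apply game_lf_iff; right; left; exists l; exact h. Qed.

Lemma game_lf_atom a b : leA a b -> Atom a <|g Atom b.
Proof. intro h; apply game_lf_iff; right; right; exact h. Qed.

Lemma game_le_atom a b : leA a b -> Atom a <=g Atom b.
Proof.
  intro h; apply game_le_iff; split; [intros []|split; [intros []|]].
  intros _; apply game_lf_atom, h.
Qed.

Section Reflexive.

Hypothesis leA_refl : forall a, leA a a.

Lemma game_le_refl (G : game A) : G <=g G.
Proof.
  induction G as [G IHL IHR] using game_opt_ind.
  apply game_le_iff; split; [|split].
  - intro l; apply (game_lf_left_opt _ _ l), IHL.
  - intro r; apply (game_lf_right_opt _ _ r), IHR.
  - intros [h|h]; destruct G; try contradiction; apply game_lf_atom, leA_refl.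
Qed.

Lemma left_opt_lf (G : game A) l : left_opt G l <|g G.
Proof. apply (game_lf_left_opt _ _ l), game_le_refl. Qed.

End Reflexive.

Section Transitive.

Hypothesis leA_trans : forall a b c, leA a b -> leA b c -> leA a c.

(* The three transitivity laws are proved by simultaneous induction on the
   triple (G, H, K); each of the next three lemmas is one case of the inductive
   step, assuming exactly the instances of the laws on options it needs. *)

Lemma game_lf_le_trans_step (G H K : game A) :
  (forall r, right_opt G r <=g H -> H <=g K -> right_opt G r <=g K) ->
  (forall l, G <=g left_opt H l -> left_opt H l <|g K -> G <|g K) ->
  (forall l, G <=g H -> H <=g left_opt K l -> G <=g left_opt K l) ->
  G <|g H -> H <=g K -> G <|g K.
Proof.
  intros IHG IHH IHK hGH hHK.
  apply game_lf_iff in hGH as [[r hGH]|[[l hGH]|hGH]].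
  - exact (game_lf_right_opt _ _ r (IHG r hGH hHK)).
  - exact (IHH l hGH (proj1 (proj1 (game_le_iff _ _) hHK) l)).
  - destruct G as [a|], H as [b|]; try contradiction.
    assert (hbK : Atom b <|g K) by (apply game_le_iff in hHK; apply hHK; left; exact I).
    apply game_lf_iff in hbK as [[[] _]|[[l hbK]|hbK]].
    + exact (game_lf_left_opt _ _ l (IHK l (game_le_atom _ _ hGH) hbK)).
    + destruct K; try contradiction; apply game_lf_atom; eauto.
Qed.

Lemma game_le_lf_trans_step (G H K : game A) :
  (forall r, G <|g right_opt H r -> right_opt H r <=g K -> G <|g K) ->
  (forall l, G <=g H -> H <=g left_opt K l -> G <=g left_opt K l) ->
  (forall r, right_opt G r <=g H -> H <=g K -> right_opt G r <=g K) ->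
  G <=g H -> H <|g K -> G <|g K.
Proof.
  intros IHH IHK IHG hGH hHK.
  apply game_lf_iff in hHK as [[r hHK]|[[l hHK]|hHK]].
  - exact (IHH r (proj1 (proj2 (proj1 (game_le_iff _ _) hGH)) r) hHK).
  - exact (game_lf_left_opt _ _ l (IHK l hGH hHK)).
  - destruct H as [b|], K as [c|]; try contradiction.
    assert (hGb : G <|g Atom b) by (apply game_le_iff in hGH; apply hGH; right; exact I).
    apply game_lf_iff in hGb as [[r hGb]|[[[] _]|hGb]].
    + exact (game_lf_right_opt _ _ r (IHG r hGb (game_le_atom _ _ hHK))).
    + destruct G; try contradiction; apply game_lf_atom; eauto.
Qed.

Lemma game_le_trans_step (G H K : game A) :
  (forall l, left_opt G l <|g H -> H <=g K -> left_opt G l <|g K) ->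
  (forall r, G <=g H -> H <|g right_opt K r -> G <|g right_opt K r) ->
  (G <|g H -> H <=g K -> G <|g K) ->
  (G <=g H -> H <|g K -> G <|g K) ->
  G <=g H -> H <=g K -> G <=g K.
Proof.
  intros IHG IHK lf_le le_lf hGH hHK.
  pose proof hGH as [hGHl [_ hGHa]]%game_le_iff.
  pose proof hHK as [_ [hHKr hHKa]]%game_le_iff.
  apply game_le_iff; split; [|split].
  - intro l; exact (IHG l (hGHl l) hHK).
  - intro r; exact (IHK r hGH (hHKr r)).
  - intros [hG|hK].
    + apply lf_le; [apply hGHa; left; exact hG | exact hHK].
    + apply le_lf; [exact hGH | apply hHKa; right; exact hK].
Qed.

Lemma game_trans_laws (G H K : game A) :
  (G <=g H -> H <=g K -> G <=g K) /\
  (G <|g H -> H <=g K -> G <|g K) /\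
  (G <=g H -> H <|g K -> G <|g K).
Proof.
  revert H K; induction G as [G IHGL IHGR] using game_opt_ind; intro H.
  induction H as [H IHHL IHHR] using game_opt_ind; intro K.
  induction K as [K IHKL IHKR] using game_opt_ind.
  assert (lf_le : G <|g H -> H <=g K -> G <|g K).
  { apply game_lf_le_trans_step.
    - intro r; apply IHGR.
    - intro l; apply IHHL.
    - intro l; apply IHKL. }
  assert (le_lf : G <=g H -> H <|g K -> G <|g K).
  { apply game_le_lf_trans_step.
    - intro r; apply IHHR.
    - intro l; apply IHKL.
    - intro r; apply IHGR. }
  split; [|split]; try assumption.
  apply game_le_trans_step; try assumption.
  - intro l; apply IHGL.
  - intro r; apply IHKR.
Qed.

Lemma game_lf_le_trans (G H K : game A) : G <|g H -> H <=g K -> G <|g K.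
Proof. apply game_trans_laws. Qed.

End Transitive.

Section Bottom.

Variable bot : A.
Hypothesis bot_least : forall a, leA bot a.

Lemma atom_bot_le_lf (H : game A) : Atom bot <=g H /\ Atom bot <|g H.
Proof.
  induction H as [H IHL IHR] using game_opt_ind.
  assert (hlf : Atom bot <|g H).
  { destruct H as [c|X Y [x] hY L R].
    - apply game_lf_atom, bot_least.
    - apply game_lf_iff; right; left; exists x; apply (IHL x). }
  split; [|exact hlf].
  apply game_le_iff; split; [intros []|split; [|intros _; exact hlf]].
  intro r; apply (IHR r).
Qed.

Lemma atom_bot_le (H : game A) : Atom bot <=g H.
Proof. apply atom_bot_le_lf. Qed.

Lemma comp_atom_bot_lf (I : idx) (hI : inhabited I) (L : I -> game A) (Y : game A) :
  Comp I unit hI (inhabits tt) L (fun _ => Atom bot) <|g Y.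
Proof. apply game_lf_iff; left; exists tt; apply atom_bot_le. Qed.

Lemma comp_atom_bot_le (I : idx) (hI : inhabited I) (L : I -> game A) (Y : game A) :
  (forall i, L i <|g Y) -> Comp I unit hI (inhabits tt) L (fun _ => Atom bot) <=g Y.
Proof.
  intro hL; apply game_le_iff; split; [exact hL|split].
  - intro r; apply comp_atom_bot_lf.
  - intros _; apply comp_atom_bot_lf.
Qed.

Lemma passable_atom_bot : passable leA (Atom bot).
Proof. split; [apply atom_bot_le_lf | exact I]. Qed.

End Bottom.

Lemma passable_lf (G : game A) : passable leA G -> G <|g G.
Proof. destruct G; simpl; tauto. Qed.

Lemma passable_left_opt (G : game A) l : passable leA G -> passable leA (left_opt G l).
Proof. destruct G; [destruct l | intros (_ & hL & _); apply hL]. Qed.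

End GameOrder.

Section LeastUpperBound.

Context {A : Type} (leA : A -> A -> Prop).
Hypothesis leA_refl : forall a, leA a a.
Hypothesis leA_trans : forall a b c, leA a b -> leA b c -> leA a c.
Variable bot : A.
Hypothesis bot_least : forall a, leA bot a.

Variables (I : idx) (S : I -> game A).
Hypothesis S_passable : forall i, passable leA (S i).
Hypothesis I_inhabited : inhabited I.

Local Notation "G <=g H" := (game_le leA G H) (at level 70).
Local Notation "G <|g H" := (game_lf leA G H) (at level 70).

Definition lub_right : game A :=
  Comp I unit I_inhabited (inhabits tt) S (fun _ => Atom bot).

Definition lub_left_idx : idx := (I + {i : I & left_idx (S i)})%type.

Definition lub_left (x : lub_left_idx) : game A :=
  match x with
  | inl i => S i
  | inr (existT _ i l) => left_opt (S i) l
  end.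

Lemma lub_left_idx_inhabited : inhabited lub_left_idx.
Proof. destruct I_inhabited as [i]; exact (inhabits (inl i)). Qed.

Definition lub_game : game A :=
  Comp lub_left_idx unit lub_left_idx_inhabited (inhabits tt) lub_left (fun _ => lub_right).

Lemma family_lf_lub_right i : S i <|g lub_right.
Proof. exact (left_opt_lf leA leA_refl lub_right i). Qed.

Lemma family_lf_lub_game i : S i <|g lub_game.
Proof. exact (left_opt_lf leA leA_refl lub_game (inl i)). Qed.

Lemma lub_game_upper i : S i <=g lub_game.
Proof.
  apply game_le_iff; split; [|split].
  - intro l; exact (left_opt_lf leA leA_refl lub_game (inr (existT _ i l))).
  - intro r; apply family_lf_lub_right.
  - intros _; apply family_lf_lub_game.
Qed.

Lemma lub_game_least (X : game A) : (forall i, S i <=g X) -> lub_game <=g X.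
Proof.
  intro upper.
  assert (family_lf : forall i, S i <|g X).
  { intro i; apply (game_lf_le_trans leA leA_trans _ (S i)); [|exact (upper i)].
    exact (passable_lf leA _ (S_passable i)). }
  apply game_le_iff; split; [|split].
  - intros [i|[i l]].
    + apply family_lf.
    + apply (game_lf_le_trans leA leA_trans _ (S i)); [|exact (upper i)].
      exact (left_opt_lf leA leA_refl (S i) l).
  - intro r; apply (game_lf_right_opt leA lub_game _ tt).
    apply (comp_atom_bot_le leA bot bot_least); intro i.
    apply (proj1 (game_le_iff leA _ _) (upper i)).
  - intros _; apply (game_lf_right_opt leA lub_game _ tt).
    exact (comp_atom_bot_le leA bot bot_least _ _ _ _ family_lf).
Qed.

Lemma lub_game_is_lub : is_lub leA S lub_game.
Proof. split; [exact lub_game_upper | exact lub_game_least]. Qed.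

Lemma passable_lub_right : passable leA lub_right.
Proof.
  split; [|split].
  - apply comp_atom_bot_lf, bot_least.
  - exact S_passable.
  - intros _; apply passable_atom_bot, bot_least.
Qed.

Lemma passable_lub_game : passable leA lub_game.
Proof.
  split; [|split].
  - apply (game_lf_right_opt leA lub_game _ tt).
    exact (comp_atom_bot_le leA bot bot_least _ _ _ _ family_lf_lub_game).
  - intros [i|[i l]]; [apply S_passable | apply passable_left_opt, S_passable].
  - intros _; exact passable_lub_right.
Qed.

End LeastUpperBound.

Lemma atom_bot_is_lub_empty {A : Type} (leA : A -> A -> Prop) (bot : A)
    (bot_least : forall a, leA bot a) (I : idx) (S : I -> game A) :
  ~ inhabited I -> is_lub leA S (Atom bot).
Proof.
  intro hI; split.
  - intro i; exfalso; exact (hI (inhabits i)).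
  - intros M' _; apply atom_bot_le, bot_least.
Qed.

Theorem lemma6p4 (A : Type) (leA : A -> A -> Prop)
  (le_refl : forall a, leA a a)
  (le_antisym : forall a b, leA a b -> leA b a -> a = b)
  (le_trans : forall a b c, leA a b -> leA b c -> leA a c)
  (has_bot : exists bot, forall a, leA bot a) :
  forall (I : idx) (S : I -> game A),
    (forall i, passable leA (S i)) ->
    exists M, is_lub leA S M /\
      exists P, passable leA P /\ game_equiv leA M P.
Proof.
  intros I S hS.
  destruct has_bot as [bot hbot].
  destruct (classic (inhabited I)) as [hI|hI].
  - exists (lub_game bot I S hI); split.
    + apply lub_game_is_lub; assumption.
    + exists (lub_game bot I S hI); split.
      * apply passable_lub_game; assumption.
      * split; apply game_le_refl, le_refl.
  - exists (Atom bot); split.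
    + apply atom_bot_is_lub_empty; assumption.
    + exists (Atom bot); split.
      * apply passable_atom_bot, hbot.
      * split; apply game_le_refl, le_refl.
Qed.
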